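(* Let $k\in\mathbb N$, $b\geqslant2$, let $\mathbb P$ be a probability measure on $\{0,1,\dots,b-1\}^k$, and let $\mu=\mu_{b,\mathbb P}$. For every $L\in\mathbb N$, \[ \dim_{\ell^1}(\mu)\geqslant\frac{-\log\Big(\displaystyle\sup_{\mathbf x\in\mathbb R^k}b^{-kL}\sum_{i_1,\dots,i_k=0}^{b^L-1}S_L\Big(\mathbf x+\frac{\mathbf i}{b^L}\Big)\Big)}{\log(b^L)}, \] where $\mathbf i=(i_1,\dots,i_k)$.
   Context: The missing-digit measure $\mu_{b,\mathbb P}$ is the distribution of the random variable $\sum_{j=1}^\infty\mathbf d^{(j)}/b^j$, where the $\mathbf d^{(j)}\in\{0,\dots,b-1\}^k$ are i.i.d. with distribution $\mathbb P$. For $\mathbf x\in\mathbb R^k$ define \[ g(\mathbf x)=\Big|\sum_{\mathbf d\in\{0,\dots,b-1\}^k}\mathbb P(\mathbf d)\,e^{2\pi i\,\mathbf d\cdot\mathbf x}\Big|,\qquad S_L(\mathbf x)=\prod_{j=0}^{L-1}g(b^j\mathbf x). \] For a Borel probability measure $\nu$ on $[0,1]^k$, $\hat\nu({\boldsymbol{\xi}})=\int e^{-2\pi i{\boldsymbol{\xi}}\cdot\mathbf x}\,d\nu(\mathbf x)$ and $\dim_{\ell^1}(\nu)=\sup\{s\geqslant0:\sum_{{\boldsymbol{\xi}}\in\mathbb Z^k,\|{\boldsymbol{\xi}}\|_\infty\leqslant Q}|\hat\nu({\boldsymbol{\xi}})|\ll Q^{k-s}\ (Q\geqslant1)\}$.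 *)

From HB Require Import structures.
From mathcomp Require Import all_boot all_order all_algebra.
From mathcomp Require Import all_classical all_reals all_analysis.
Set Implicit Arguments. Unset Strict Implicit. Unset Printing Implicit Defensive.
Import Order.TTheory GRing.Theory Num.Theory numFieldNormedType.Exports.
Local Open Scope classical_set_scope.
Local Open Scope ring_scope.

Section MissingDigit.
Variable R : realType.

Definition digit (k b : nat) := {ffun 'I_k -> 'I_b}.

Definition is_prob (k b : nat) (P : digit k b -> R) : Prop :=
  (forall d, 0 <= P d) /\ \sum_(d : digit k b) P d = 1.

Definition ddot (k b : nat) (d : digit k b) (x : 'I_k -> R) : R :=
  \sum_(i < k) ((d i : nat)%:R * x i).

Definition cmod (re im : R) : R := Num.sqrt (re ^+ 2 + im ^+ 2).

(* g(x) = | sum_d P(d) e^{2 pi i d.x} | *)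
Definition gfun (k b : nat) (P : digit k b -> R) (x : 'I_k -> R) : R :=
  cmod (\sum_(d : digit k b) P d * cos (2 * pi * ddot d x))
       (\sum_(d : digit k b) P d * sin (2 * pi * ddot d x)).

Definition S_L (k b : nat) (P : digit k b -> R) (L : nat) (x : 'I_k -> R) : R :=
  \prod_(j < L) gfun P (fun i => (b ^ j)%:R * x i).

(* Phase  xi . X_n  where X_n = sum_{j=1}^n d^(j) / b^j, for a digit word
   w = (d^(1),...,d^(n)) (w j is d^(j+1)). *)
Definition phase_n (k b n : nat) (xi : 'I_k -> int) (w : {ffun 'I_n -> digit k b}) : R :=
  \sum_(j < n) \sum_(i < k) (xi i)%:~R * ((w j i : nat)%:R / (b ^ j.+1)%:R).

Definition wprob (k b n : nat) (P : digit k b -> R) (w : {ffun 'I_n -> digit k b}) : R :=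
  \prod_(j < n) P (w j).

(* Fourier coefficient of the law mu_n of X_n = sum_{j=1}^n d^(j)/b^j:
   hat mu_n(xi) = E[e^{-2 pi i xi . X_n}]  (real and imaginary parts). *)
Definition muhat_re_n (k b : nat) (P : digit k b -> R) (xi : 'I_k -> int) (n : nat) : R :=
  \sum_(w : {ffun 'I_n -> digit k b}) wprob P w * cos (- (2 * pi * phase_n xi w)).
Definition muhat_im_n (k b : nat) (P : digit k b -> R) (xi : 'I_k -> int) (n : nat) : R :=
  \sum_(w : {ffun 'I_n -> digit k b}) wprob P w * sin (- (2 * pi * phase_n xi w)).

(* mu_{b,P} is the law of X = sum_{j>=1} d^(j)/b^j = lim X_n (a.s., hence in
   law), so hat mu(xi) = lim_n hat mu_n(xi). *)
Definition muhat_abs (k b : nat) (P : digit k b -> R) (xi : 'I_k -> int) : R :=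
  cmod (limn (muhat_re_n P xi)) (limn (muhat_im_n P xi)).

(* sum over xi in Z^k with ||xi||_oo <= N of |hat mu(xi)| ;
   xi_i = j_i - N with j_i in {0,...,2N}. *)
Definition box_sum (k b : nat) (P : digit k b -> R) (N : nat) : R :=
  \sum_(j : {ffun 'I_k -> 'I_(N.*2.+1)})
     muhat_abs P (fun i => (j i : nat)%:Z - N%:Z).

Definition dim_l1 (k b : nat) (P : digit k b -> R) : \bar R :=
  ereal_sup [set (s%:E)%E | s in
    [set s : R | 0 <= s /\
       exists C : R, forall Q : R, 1 <= Q ->
         box_sum P (Num.truncn Q) <= C * Q `^ (k%:R - s)]].

Definition sup_avg (k b : nat) (P : digit k b -> R) (L : nat) : R :=
  sup [set (((b ^ (k * L))%:R)^-1 *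
          \sum_(i : {ffun 'I_k -> 'I_(b ^ L)})
             S_L P L (fun m => x m + (i m : nat)%:R / (b ^ L)%:R)) | x in
       [set: 'I_k -> R]].

End MissingDigit.

(* The Fourier coefficient of the law of the first n digits factorises as
   hat mu_n(xi) = prod_(j < n) phi(xi / b^(j+1)) with |phi| = g, so |hat mu_n(xi)|
   decreases in n; the factors tend to 1 geometrically fast, hence hat mu_n(xi)
   converges to hat mu(xi) and |hat mu(xi)| <= |hat mu_(Lm)(xi)|, a product of m
   values of S_L at the points xi / b^(L t), t = 1..m.  Over a box of side
   M = b^(Lm), split each frequency into its lowest L base-b digits and the rest;
   since S_L is 1-periodic, summing out the low digits produces the factor
   b^(kL) A, where A is the supremum of the averages of S_L.  Hence
   sum_(|xi| <= N) |hat mu(xi)| <= (b^(kL) A)^m = M^(k - s) with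
   s = - log A / log b^L, and choosing M of order N gives the bound. *)

From HB Require Import structures.
From mathcomp Require Import all_boot all_order all_algebra.
From mathcomp Require Import all_classical all_reals all_analysis.
From mathcomp Require Import complex.
From mathcomp Require Import ring lra zify.
Import Order.TTheory GRing.Theory Num.Theory numFieldNormedType.Exports.
Import ComplexField.Normc.
Set Implicit Arguments. Unset Strict Implicit. Unset Printing Implicit Defensive.
Local Open Scope classical_set_scope.
Local Open Scope ring_scope.
Local Open Scope complex_scope.

Section ComplexNorm.
Variable R : rcfType.
Implicit Types z : R[i].

Lemma normc_ge0 z : 0 <= normc z.
Proof. by case: z => a c; rewrite /= sqrtr_ge0. Qed.

Lemma normc_real (r : R) : normc r%:C = `|r|.
Proof. by rewrite /= expr0n /= addr0 sqrtr_sqr. Qed.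

Lemma normc_le_Re_Im (a c : R) : normc (Complex a c) <= `|a| + `|c|.
Proof.
rewrite /= -[leRHS]ger0_norm ?addr_ge0 // -[leRHS]sqrtr_sqr ler_wsqrtr //.
by rewrite sqrrD !real_normK ?num_real // addrAC lerDl mulrn_wge0 // mulr_ge0.
Qed.

Lemma norm_Re_le_normc z : `|complex.Re z| <= normc z.
Proof.
by case: z => a c /=; rewrite -sqrtr_sqr ler_wsqrtr // lerDl sqr_ge0.
Qed.

Lemma norm_Im_le_normc z : `|complex.Im z| <= normc z.
Proof.
by case: z => a c /=; rewrite -sqrtr_sqr ler_wsqrtr // lerDr sqr_ge0.
Qed.

Lemma normc_sum (I : Type) (r : seq I) (Pr : pred I) (F : I -> R[i]) :
  normc (\sum_(i <- r | Pr i) F i) <= \sum_(i <- r | Pr i) normc (F i).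
Proof. exact: (@ler_norm_sum _ (Rcomplex R)). Qed.

Lemma normc_prod (I : Type) (r : seq I) (Pr : pred I) (F : I -> R[i]) :
  normc (\prod_(i <- r | Pr i) F i) = \prod_(i <- r | Pr i) normc (F i).
Proof. exact: (big_morph _ (@normcM R) (@normc1 R)). Qed.

Lemma sum_Complex (I : Type) (r : seq I) (Pr : pred I) (F G : I -> R) :
  \sum_(i <- r | Pr i) Complex (F i) (G i) =
  Complex (\sum_(i <- r | Pr i) F i) (\sum_(i <- r | Pr i) G i).
Proof. by elim/big_rec3: _ => [|i x y z _ ->]. Qed.

End ComplexNorm.

Section ExpI.
Variable R : realType.

Definition expi (t : R) : R[i] := Complex (cos t) (sin t).

Lemma expiD s t : expi (s + t) = expi s * expi t.
Proof. by rewrite /expi cosD sinD; simpc; congr Complex; rewrite addrC. Qed.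

Lemma expi0 : expi 0 = 1.
Proof. by rewrite /expi cos0 sin0; apply/eqP; simpc. Qed.

Lemma expi_sum (I : Type) (r : seq I) (Pr : pred I) (f : I -> R) :
  expi (\sum_(i <- r | Pr i) f i) = \prod_(i <- r | Pr i) expi (f i).
Proof. exact: (big_morph expi expiD expi0). Qed.

Lemma real_mul_expi (r t : R) : r%:C * expi t = Complex (r * cos t) (r * sin t).
Proof. by rewrite /expi; simpc. Qed.

Lemma normc_sum_expiN (I : Type) (r : seq I) (F f : I -> R) :
  normc (\sum_(i <- r) (F i)%:C * expi (- f i)) =
  normc (\sum_(i <- r) (F i)%:C * expi (f i)).
Proof.
under eq_bigr do rewrite real_mul_expi cosN sinN mulrN.
under [in RHS]eq_bigr do rewrite real_mul_expi.
by rewrite !sum_Complex /= sumrN sqrrN.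
Qed.

Lemma normc_expi t : normc (expi t) = 1.
Proof. by rewrite /expi /= cos2Dsin2 sqrtr1. Qed.

Lemma dist_le_of_norm_derive_le1 (f df : R -> R) :
  (forall x : R, is_derive x (1 : R) f (df x)) -> (forall x, `|df x| <= 1) ->
  forall x y, `|f x - f y| <= `|x - y|.
Proof.
move=> f_df df_le1.
suff le_xy x y : x <= y -> `|f y - f x| <= `|y - x|.
  move=> x y; have [/le_xy|/ltW/le_xy //] := leP x y.
  by rewrite distrC (distrC y).
move=> xy; have cf : {within `[x, y], continuous f}.
  apply: continuous_subspaceT => z.
  exact/differentiable_continuous/derivable1_diffP/ex_derive.
have [c _ ->] := MVT_segment xy (fun z _ => f_df z) cf.
by rewrite normrM ler_piMl.
Qed.

Lemma normc_expi_sub1 t : normc (expi t - 1) <= 2 * `|t|.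
Proof.
have sin_le : `|sin t - sin 0| <= `|t - 0|.
  exact: (dist_le_of_norm_derive_le1 (fun z => is_derive_sin z) (@cos_max R)).
have cos_le : `|cos t - cos 0| <= `|t - 0|.
  apply: (dist_le_of_norm_derive_le1 (fun z => is_derive_cos z)) => z.
  by rewrite normrN sin_max.
rewrite sin0 cos0 !subr0 in sin_le cos_le.
have -> : expi t - 1 = Complex (cos t - 1) (sin t) by rewrite /expi; simpc.
by rewrite (le_trans (normc_le_Re_Im _ _)) // mulr2n mulrDl mul1r lerD.
Qed.

End ExpI.

Lemma cvgn_geometric_increments (R : realType) (u : R ^nat) (C q : R) :
  0 <= q < 1 -> (forall n, `|u n.+1 - u n| <= C * q ^+ n) -> cvgn u.
Proof.
move=> /andP[q_ge0 q_lt1] du_le.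
have C_ge0 : 0 <= C by have := du_le 0%N; rewrite expr0 mulr1; apply: le_trans.
have cvg_du : cvgn (series (telescope u)).
  apply: normed_cvg; apply: (series_le_cvg _ _ du_le).
  - by move=> n; rewrite normr_ge0.
  - by move=> n; rewrite mulr_ge0 ?exprn_ge0.
  by apply: is_cvg_geometric_series; rewrite ger0_norm.
rewrite (_ : u = (fun=> u 0%N) + series (telescope u)); last first.
  by apply/funext => n; rewrite [LHS]eq_sum_telescope.
exact: is_cvgD (is_cvg_cst _) cvg_du.
Qed.

Lemma sum_ffun_ord_mul (V : nmodType) (n a c : nat) (F : ('I_n -> nat) -> V) :
  (0 < a)%N ->
  \sum_(y : {ffun 'I_n -> 'I_(a * c)}) F (fun t => y t : nat) =
  \sum_(i : {ffun 'I_n -> 'I_a}) \sum_(e : {ffun 'I_n -> 'I_c})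
      F (fun t => (i t + a * e t)%N).
Proof.
move=> a_gt0; rewrite pair_bigA /=.
have lt_join (i : 'I_a) (e : 'I_c) : (i + a * e < a * c)%N.
  by have := ltn_ord i; have := ltn_ord e; nia.
have lt_mod (y : 'I_(a * c)) : (y %% a < a)%N by rewrite ltn_pmod.
have lt_div (y : 'I_(a * c)) : (y %/ a < c)%N.
  by rewrite ltn_divLR //; have := ltn_ord y; lia.
pose join (p : {ffun 'I_n -> 'I_a} * {ffun 'I_n -> 'I_c}) : {ffun 'I_n -> 'I_(a * c)} :=
  [ffun t => Ordinal (lt_join (p.1 t) (p.2 t))].
pose split (y : {ffun 'I_n -> 'I_(a * c)}) :=
  ([ffun t => Ordinal (lt_mod (y t))], [ffun t => Ordinal (lt_div (y t))]).
have join_bij : bijective join.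
  exists split.
    move=> [i e]; congr pair; apply/ffunP => t; apply/val_inj; rewrite /= !ffunE /=.
      by rewrite addnC mulnC modnMDl modn_small.
    by rewrite addnC mulnC divnMDl // divn_small // addn0.
  by move=> y; apply/ffunP => t; apply/val_inj; rewrite /= !ffunE /= addnC mulnC -divn_eq.
rewrite (reindex join) /=; last exact: onW_bij.
by apply: eq_bigr => p _; congr F; apply/funext => t; rewrite ffunE.
Qed.

Lemma ler_sum_inj (V : numDomainType) (I J : finType) (h : I -> J) (F : J -> V) :
  injective h -> (forall j, 0 <= F j) -> \sum_(i : I) F (h i) <= \sum_(j : J) F j.
Proof.
move=> h_inj F_ge0; rewrite -(big_imset _ (in2W h_inj)) /=.
set A := (h @: _)%SET.
by rewrite [leRHS](bigID (mem A)) /= lerDl sumr_ge0.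
Qed.

Section MissingDigit.
Variables (R : realType) (k b : nat) (P : digit k b -> R).
Hypothesis hP : is_prob P.
Hypothesis hb : (2 <= b)%N.

Lemma b_gt0 : (0 < b)%N. Proof. exact: leq_trans hb. Qed.

Lemma natr_expb_neq0 n : (b ^ n)%:R != 0 :> R.
Proof. by rewrite pnatr_eq0 -lt0n expn_gt0 b_gt0. Qed.

Definition digit_phase (xi : 'I_k -> int) (j : nat) (d : digit k b) : R :=
  - (2 * pi * \sum_(i < k) (xi i)%:~R * ((d i : nat)%:R / (b ^ j.+1)%:R)).

Definition digit_fourier (xi : 'I_k -> int) (j : nat) : R[i] :=
  \sum_(d : digit k b) (P d)%:C * expi (digit_phase xi j d).

Definition muhat_n (xi : 'I_k -> int) (n : nat) : R[i] :=
  Complex (muhat_re_n P xi n) (muhat_im_n P xi n).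

Lemma muhat_n_prod xi n : muhat_n xi n = \prod_(j < n) digit_fourier xi j.
Proof.
rewrite /digit_fourier bigA_distr_bigA /muhat_n /muhat_re_n /muhat_im_n -sum_Complex.
apply: eq_bigr => w _; rewrite -real_mul_expi big_split /= -rmorph_prod -expi_sum.
by rewrite /phase_n mulr_sumr -sumrN.
Qed.

Lemma gfun_normc x :
  gfun P x = normc (\sum_(d : digit k b) (P d)%:C * expi (2 * pi * ddot d x)).
Proof. by under eq_bigr do rewrite real_mul_expi; rewrite sum_Complex. Qed.

Lemma gfun_ge0 x : 0 <= gfun P x.
Proof. by rewrite gfun_normc normc_ge0. Qed.

Lemma gfun_le1 x : gfun P x <= 1.
Proof.
rewrite gfun_normc -hP.2; apply: le_trans (normc_sum _ _ _) _.
apply: ler_sum => d _.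
by rewrite normcM normc_expi mulr1 normc_real ger0_norm ?hP.1.
Qed.

Lemma normc_digit_fourier xi j :
  normc (digit_fourier xi j) = gfun P (fun i => (xi i)%:~R / (b ^ j.+1)%:R).
Proof.
rewrite gfun_normc -normc_sum_expiN /digit_fourier /digit_phase.
congr normc; apply: eq_bigr => d _.
by rewrite opprK; congr (_ * expi (_ * _)); apply: eq_bigr => i _; rewrite mulrCA.
Qed.

Lemma normc_muhat_n xi n :
  normc (muhat_n xi n) = \prod_(j < n) gfun P (fun i => (xi i)%:~R / (b ^ j.+1)%:R).
Proof.
by rewrite muhat_n_prod normc_prod; apply: eq_bigr => j _; rewrite normc_digit_fourier.
Qed.

Lemma normc_muhat_n_le1 xi n : normc (muhat_n xi n) <= 1.
Proof. by rewrite normc_muhat_n prodr_ile1 // => j _; rewrite gfun_ge0 gfun_le1. Qed.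

Lemma normc_muhat_n_nonincreasing xi m n :
  (m <= n)%N -> normc (muhat_n xi n) <= normc (muhat_n xi m).
Proof.
move=> mn; rewrite !normc_muhat_n -(subnKC mn) big_split_ord /=.
rewrite ler_piMr ?prodr_ge0 ?prodr_ile1 // => j _; by rewrite ?gfun_ge0 ?gfun_le1.
Qed.

Definition phase_const (xi : 'I_k -> int) : R := 4 * pi * \sum_(i < k) `|(xi i)%:~R : R|.

Lemma norm_digit_phase_le xi j d :
  2 * `|digit_phase xi j d| <= phase_const xi * (b%:R^-1) ^+ j.
Proof.
have le_digit (i : 'I_k) : (d i : nat)%:R / (b ^ j.+1)%:R <= (b%:R^-1) ^+ j :> R.
  rewrite exprVn -natrX expnSr natrM invfM mulrCA ler_piMr ?invr_ge0 //.
  by rewrite ler_pdivrMr ?ltr0n ?b_gt0 // mul1r ler_nat ltnW.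
have sum_le : `|\sum_(i < k) (xi i)%:~R * ((d i : nat)%:R / (b ^ j.+1)%:R)|
    <= (\sum_(i < k) `|(xi i)%:~R : R|) * (b%:R^-1) ^+ j.
  rewrite mulr_suml (le_trans (ler_norm_sum _ _ _)) // ler_sum // => i _.
  by rewrite normrM ler_wpM2l // ger0_norm ?divr_ge0.
rewrite /digit_phase /phase_const normrN normrM ger0_norm ?mulr_ge0 ?pi_ge0 //.
have := pi_ge0 R; nra.
Qed.

Lemma normc_digit_fourier_sub1 xi j :
  normc (digit_fourier xi j - 1) <= phase_const xi * (b%:R^-1) ^+ j.
Proof.
have -> : 1 = \sum_(d : digit k b) (P d)%:C by rewrite -rmorph_sum hP.2.
rewrite /digit_fourier -sumrB (le_trans (normc_sum _ _ _)) //.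
rewrite -[leRHS]mul1r -[X in X * _]hP.2 mulr_suml ler_sum // => d _.
rewrite -[X in _ - X]mulr1 -mulrBr normcM normc_real ger0_norm ?hP.1 //.
rewrite ler_wpM2l ?hP.1 //.
exact: le_trans (normc_expi_sub1 _) (norm_digit_phase_le _ _ _).
Qed.

Lemma normc_muhat_n_succB xi n :
  normc (muhat_n xi n.+1 - muhat_n xi n) <= phase_const xi * (b%:R^-1) ^+ n.
Proof.
rewrite !muhat_n_prod big_ord_recr /= -[X in _ - X]mulr1 -mulrBr normcM.
rewrite (le_trans _ (normc_digit_fourier_sub1 xi n)) // ler_piMl ?normc_ge0 //.
by rewrite -muhat_n_prod normc_muhat_n_le1.
Qed.

Lemma inv_b_ge0_lt1 : 0 <= (b%:R : R)^-1 < 1.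
Proof. by rewrite invr_ge0 ler0n invf_lt1 ?ltr0n ?ltr1n ?b_gt0. Qed.

Lemma cvgn_muhat_re_n xi : cvgn (muhat_re_n P xi).
Proof.
apply: (cvgn_geometric_increments inv_b_ge0_lt1) => n.
exact: le_trans (norm_Re_le_normc _) (normc_muhat_n_succB xi n).
Qed.

Lemma cvgn_muhat_im_n xi : cvgn (muhat_im_n P xi).
Proof.
apply: (cvgn_geometric_increments inv_b_ge0_lt1) => n.
exact: le_trans (norm_Im_le_normc _) (normc_muhat_n_succB xi n).
Qed.

Lemma muhat_abs_le_normc xi n : muhat_abs P xi <= normc (muhat_n xi n).
Proof.
rewrite /muhat_abs /cmod -(ger0_norm (normc_ge0 _)) -sqrtr_sqr ler_wsqrtr //.
have re_cvg := @cvgn_muhat_re_n xi; have im_cvg := @cvgn_muhat_im_n xi.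
rewrite !expr2; apply: (cvgr_to_le (cvgD (cvgM re_cvg re_cvg) (cvgM im_cvg im_cvg))).
near=> m; have nm : (n <= m)%N by near: m; exact: nbhs_infty_ge.
have := normc_muhat_n_nonincreasing xi nm; rewrite /= -!expr2.
rewrite -ler_sqr ?nnegrE ?sqrtr_ge0 ?normc_ge0 // sqr_sqrtr // addr_ge0 ?sqr_ge0.
Unshelve. all: by end_near.
Qed.

Lemma gfun_shift_nat x (n : 'I_k -> nat) :
  gfun P (fun i => x i + (n i)%:R) = gfun P x.
Proof.
have shift d : 2 * pi * ddot d (fun i => x i + (n i)%:R) =
    2 * pi * ddot d x + pi *+ 2 *+ (\sum_(i < k) d i * n i)%N.
  rewrite /ddot -[pi *+ 2 *+ _]mulr_natr -[pi *+ 2]mulr_natl natr_sum -mulrDr.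
  by rewrite -big_split /=; congr (_ * _); apply: eq_bigr => i _; rewrite natrM mulrDr.
rewrite /gfun; congr cmod; apply: eq_bigr => d _.
  by rewrite shift (periodicn (@cosD2pi R)).
by rewrite shift (periodicn (@sinD2pi R)).
Qed.

Lemma S_L_shift_nat L x (n : 'I_k -> nat) :
  S_L P L (fun i => x i + (n i)%:R) = S_L P L x.
Proof.
apply: eq_bigr => j _; rewrite -[RHS](gfun_shift_nat _ (fun i => b ^ j * n i)%N).
by congr gfun; apply/funext => i; rewrite natrM mulrDr.
Qed.

Lemma S_L_ge0 L x : 0 <= S_L P L x.
Proof. by apply: prodr_ge0 => j _; apply: gfun_ge0. Qed.

Lemma S_L_le1 L x : S_L P L x <= 1.
Proof. by apply: prodr_ile1 => j _; rewrite gfun_ge0 gfun_le1. Qed.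

Lemma S_L0 L : S_L P L (fun=> 0) = 1.
Proof.
apply: big1 => j _; rewrite gfun_normc.
have ddot0 d : ddot d (fun i => (b ^ j)%:R * 0) = 0 :> R.
  by rewrite /ddot big1 // => i _; rewrite !mulr0.
under eq_bigr do rewrite ddot0 mulr0 expi0 mulr1.
by rewrite -rmorph_sum hP.2 normc1.
Qed.

Definition S_block L m (x : 'I_k -> R) : R :=
  \prod_(t < m) S_L P L (fun i => x i / (b ^ (L * t.+1))%:R).

Lemma S_block_ge0 L m x : 0 <= S_block L m x.
Proof. by apply: prodr_ge0 => t _; apply: S_L_ge0. Qed.

Lemma prod_gfun_S_block L m x :
  \prod_(j < L * m) gfun P (fun i => x i / (b ^ j.+1)%:R) = S_block L m x.
Proof.
elim: m => [|m IH]; first by rewrite muln0 /S_block !big_ord0.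
rewrite /S_block big_ord_recr /= -/(S_block L m x) -IH mulnS addnC big_split_ord /=; congr (_ * _).
rewrite /S_L (reindex_inj rev_ord_inj) /=; apply: eq_bigr => r _.
congr gfun; apply/funext => i.
have -> : (L * m + L = r + (L * m + (L - r.+1)).+1)%N by have := ltn_ord r; lia.
by rewrite expnD natrM invfM [RHS]mulrCA mulVKf ?natr_expb_neq0.
Qed.

Lemma muhat_abs_le_S_block L m xi :
  muhat_abs P xi <= S_block L m (fun i => (xi i)%:~R).
Proof.
rewrite -prod_gfun_S_block -normc_muhat_n //.
exact: muhat_abs_le_normc.
Qed.

Definition S_avg L (x : 'I_k -> R) : R :=
  ((b ^ (k * L))%:R)^-1 * \sum_(i : {ffun 'I_k -> 'I_(b ^ L)})
     S_L P L (fun m => x m + (i m : nat)%:R / (b ^ L)%:R).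

Lemma card_digit_box L : #|{ffun 'I_k -> 'I_(b ^ L)}| = (b ^ (k * L))%N.
Proof. by rewrite card_ffun !card_ord -expnM mulnC. Qed.

Lemma S_avg_le1 L x : S_avg L x <= 1.
Proof.
rewrite ler_pdivrMl ?ltr0n ?expn_gt0 ?b_gt0 // mulr1.
apply: le_trans (ler_sum _ (fun i _ => S_L_le1 L _)) _.
by rewrite sumr_const card_digit_box.
Qed.

Lemma S_avg_le_sup_avg L x : S_avg L x <= sup_avg P L.
Proof. by apply: ub_le_sup; [exists 1 => _ [y _ <-]; apply: S_avg_le1 | exists x]. Qed.

Lemma sup_avg_le1 L : sup_avg P L <= 1.
Proof. by apply: ge_sup => [|_ [x _ <-]]; [exists (S_avg L 0), 0 | apply: S_avg_le1]. Qed.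

Lemma sup_avg_ge L : ((b ^ (k * L))%:R)^-1 <= sup_avg P L.
Proof.
apply: le_trans (S_avg_le_sup_avg L (fun=> 0)).
rewrite ler_pMr ?invr_gt0 ?ltr0n ?expn_gt0 ?b_gt0 //.
have bL_gt0 : (0 < b ^ L)%N by rewrite expn_gt0 b_gt0.
rewrite (bigD1 [ffun=> Ordinal bL_gt0]) //=.
have -> : S_L P L (fun m => 0 + ([ffun=> Ordinal bL_gt0] m : nat)%:R / (b ^ L)%:R) = 1.
  by rewrite -(S_L0 L); congr S_L; apply/funext => i; rewrite ffunE /= mul0r addr0.
by rewrite lerDl sumr_ge0 // => i _; apply: S_L_ge0.
Qed.

Lemma S_block_recl L m y : S_block L m.+1 y =
  S_L P L (fun i => y i / (b ^ L)%:R) * S_block L m (fun i => y i / (b ^ L)%:R).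
Proof.
rewrite /S_block big_ord_recl muln1; congr (_ * _); apply: eq_bigr => t _.
by congr S_L; apply/funext => i; rewrite /= mulnS expnD natrM invfM mulrA.
Qed.

Lemma S_block_shift L m x (n : 'I_k -> nat) :
  S_block L m (fun i => x i + ((b ^ L) ^ m * n i)%N%:R) = S_block L m x.
Proof.
apply: eq_bigr => t _.
rewrite -[RHS](S_L_shift_nat L _ (fun i => b ^ (L * (m - t.+1)) * n i)%N).
congr S_L; apply/funext => i.
have -> : ((b ^ L) ^ m = b ^ (L * t.+1) * b ^ (L * (m - t.+1)))%N.
  by rewrite -expnM -expnD -mulnDr subnKC.
by rewrite !natrM; field; rewrite natr_expb_neq0.
Qed.

Lemma sum_S_block_le L m x :
  \sum_(y : {ffun 'I_k -> 'I_((b ^ L) ^ m)}) S_block L m (fun i => x i + (y i : nat)%:R)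
    <= ((b ^ (k * L))%:R * sup_avg P L) ^+ m.
Proof.
have Q_ge0 : 0 <= (b ^ (k * L))%:R * sup_avg P L.
  by rewrite mulr_ge0 // (le_trans _ (sup_avg_ge L)).
have BL_gt0 : (0 < b ^ L)%N by rewrite expn_gt0 b_gt0.
have BL_neq0 := natr_expb_neq0 L.
elim: m x => [|m IH] x.
  rewrite /S_block; under eq_bigr do rewrite big_ord0.
  by rewrite sumr_const card_ffun !card_ord expn0 exp1n.
(* Split y into its lowest L base-b digits i and the remaining ones e. *)
rewrite expnS (@sum_ffun_ord_mul _ _ _ _ (fun v => S_block L m.+1 (fun i => x i + (v i)%:R))) //=.
have split_digit (i : {ffun 'I_k -> 'I_(b ^ L)}) (e : {ffun 'I_k -> 'I_((b ^ L) ^ m)}) :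
    S_block L m.+1 (fun t => x t + (i t + b ^ L * e t)%N%:R) =
    S_L P L (fun t => x t / (b ^ L)%:R + (i t : nat)%:R / (b ^ L)%:R) *
    S_block L m (fun t => (x t + (i t : nat)%:R) / (b ^ L)%:R + (e t : nat)%:R).
  have digits_shift t : (x t + (i t + b ^ L * e t)%N%:R) / (b ^ L)%:R =
      (x t + (i t : nat)%:R) / (b ^ L)%:R + (e t : nat)%:R.
    by rewrite natrD natrM addrA mulrDl mulrAC divff // mul1r.
  rewrite S_block_recl (funext digits_shift) S_L_shift_nat; congr (S_L _ _ _ * _).
  by apply/funext => t; rewrite mulrDl.
under eq_bigr do under eq_bigr do rewrite split_digit.
apply: le_trans (_ : \sum_(i : {ffun 'I_k -> 'I_(b ^ L)})
    S_L P L (fun t => x t / (b ^ L)%:R + (i t : nat)%:R / (b ^ L)%:R) *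
    ((b ^ (k * L))%:R * sup_avg P L) ^+ m <= _).
  by apply: ler_sum => i _; rewrite -mulr_sumr ler_wpM2l ?S_L_ge0.
rewrite -mulr_suml exprS ler_wpM2r ?exprn_ge0 //.
have := S_avg_le_sup_avg L (fun t => x t / (b ^ L)%:R).
by rewrite /S_avg ler_pdivrMl // ltr0n expn_gt0 b_gt0.
Qed.

Lemma box_sum_le L m N : (N.*2.+1 <= (b ^ L) ^ m)%N ->
  box_sum P N <= ((b ^ (k * L))%:R * sup_avg P L) ^+ m.
Proof.
move=> hN; set M := ((b ^ L) ^ m)%N.
have M_gt0 : (0 < M)%N by apply: leq_trans hN.
(* rho reduces j - N modulo M coordinatewise, a shift by multiples of M that
   S_block does not see. *)
pose rho (j : {ffun 'I_k -> 'I_(N.*2.+1)}) : {ffun 'I_k -> 'I_M} :=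
  [ffun i => Ordinal (ltn_pmod (j i + (M - N)) M_gt0)].
have rho_inj : injective rho.
  move=> j1 j2 /ffunP rho_eq; apply/ffunP => i; apply/val_inj.
  have := congr1 val (rho_eq i); rewrite !ffunE /= => /eqP.
  by rewrite eqn_modDr !modn_small ?(leq_trans (ltn_ord _) hN) // => /eqP.
have rho_shift j i : (0 + (rho j i : nat)%:R : R) =
    ((j i : nat)%:Z - N%:Z)%:~R + (M * (1 - (j i + (M - N)) %/ M))%N%:R.
  rewrite ffunE /= add0r; set s := (j i + (M - N))%N.
  have s_lt : (s < 2 * M)%N by have := ltn_ord (j i); rewrite /s; lia.
  have q_le1 : (s %/ M <= 1)%N by rewrite -ltnS ltn_divLR // mulnC.
  have s_eq := divn_eq s M.
  have E : ((s %% M)%N%:Z = (j i : nat)%:Z - N%:Z + (M * (1 - s %/ M))%N%:Z)%R.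
    move: q_le1 s_eq; rewrite /s; case: (_ %/ M)%N => [|[|//]] _; lia.
  by rewrite [LHS]pmulrn E rmorphD /= -pmulrn.
apply: le_trans (sum_S_block_le L m (fun=> 0)).
apply: le_trans (ler_sum_inj rho_inj _); last by move=> y; apply: S_block_ge0.
rewrite /box_sum ler_sum // => j _.
apply: le_trans (muhat_abs_le_S_block L m _) _.
by rewrite (funext (rho_shift j)) S_block_shift.
Qed.

End MissingDigit.

Lemma expn_trunc_logS_le (n B : nat) : (1 < B)%N ->
  (B ^ (trunc_log B n).+1 <= B * n.+1)%N.
Proof.
move=> B_gt1; rewrite expnS leq_mul2l; apply/orP; right.
have [->|n_gt0] := posnP n; first by rewrite trunc_log0.
exact: leq_trans (trunc_logP B_gt1 n_gt0) _.
Qed.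

Lemma exprMn_powR_ln (R : realType) (k m : nat) (lam A : R) :
  0 < lam -> ln lam != 0 -> 0 < A ->
  (lam ^+ k * A) ^+ m = (lam ^+ m) `^ (k%:R - (- ln A / ln lam)).
Proof.
move=> lam_gt0 ln_lam_neq0 A_gt0.
rewrite /powR expf_eq0 gt_eqF // andbF lnXn // -[_ *+ m]mulr_natl.
rewrite -[in LHS](lnK A_gt0) -[in LHS](lnK lam_gt0).
rewrite -expRM_natl -expRD -expRM_natl; congr expR.
by field.
Qed.

Lemma dim_l1_ge_of_box_sum_le (R : realType) (k b : nat) (P : digit k b -> R)
    (B : nat) (A : R) :
  (2 <= B)%N -> A <= 1 -> ((B ^ k)%:R)^-1 <= A ->
  (forall N m, (N.*2.+1 <= B ^ m)%N -> box_sum P N <= ((B ^ k)%:R * A) ^+ m) ->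
  ((- ln A / ln B%:R)%:E <= dim_l1 P)%E.
Proof.
move=> B_ge2 A_le1 A_ge box_le.
set lam := (B%:R : R); set a := - ln A / ln lam.
have lam_gt1 : 1 < lam by rewrite /lam (ltr_nat R 1).
have lam_gt0 : 0 < lam by apply: lt_trans lam_gt1.
have ln_lam_gt0 : 0 < ln lam by apply: ln_gt0.
have A_gt0 : 0 < A by apply: lt_le_trans A_ge; rewrite invr_gt0 ltr0n expn_gt0 (ltnW B_ge2).
have a_ge0 : 0 <= a by rewrite divr_ge0 ?oppr_ge0 ?ln_le0 // ltW.
have a_le_k : a <= k%:R.
  rewrite ler_pdivrMr // lerNl.
  move: A_ge; rewrite -ler_ln ?posrE ?invr_gt0 ?ltr0n ?expn_gt0 ?(ltnW B_ge2) //.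
  by rewrite natrX -/lam lnV ?posrE ?exprn_gt0 // lnXn // mulr_natl.
set s := k%:R - a.
have s_ge0 : 0 <= s by rewrite subr_ge0.
apply: ereal_sup_ubound; exists a => //; split => //.
exists ((3 * lam) `^ s) => Q Q_ge1.
set N := Num.truncn Q.
have Q_ge0 : 0 <= Q by apply: le_trans Q_ge1.
(* m is the least exponent with 2N + 1 <= B ^ m. *)
set m := (trunc_log B N.*2).+1.
have lam_pow_le : lam ^+ m <= 3 * lam * Q.
  move: (expn_trunc_logS_le N.*2 B_ge2); rewrite -(ler_nat R) natrX natrM -/lam.
  move=> /le_trans; apply; have : (N%:R : R) <= Q by rewrite truncn_le.
  by rewrite -addnn -addn1 !natrD -mulrA; move: lam_gt0; nra.
apply: le_trans (box_le N m (trunc_log_ltn _ _)) _ => //.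
rewrite natrX -/lam (exprMn_powR_ln k m lam_gt0 (lt0r_neq0 ln_lam_gt0) A_gt0) -/a -/s.
apply: le_trans (ge0_ler_powR s_ge0 _ _ lam_pow_le) _.
- by rewrite nnegrE exprn_ge0 // ltW.
- by rewrite nnegrE !mulr_ge0 // ltW.
by rewrite powRM ?mulr_ge0 // ltW.
Qed.

Theorem theoremA2 (R : realType) (k b : nat) (P : digit k b -> R)
  (hb : (2 <= b)%N) (hP : is_prob P) (L : nat) (hL : (0 < L)%N) :
  ((- ln (sup_avg P L) / ln ((b ^ L)%:R))%:E <= dim_l1 P)%E.
Proof.
have bL_ge2 : (2 <= b ^ L)%N.
  by rewrite (leq_trans hb) // -{1}(expn1 b) leq_pexp2l // ltnW.
have expnCM : (b ^ (k * L) = (b ^ L) ^ k)%N by rewrite -expnM mulnC.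
apply: dim_l1_ge_of_box_sum_le bL_ge2 (sup_avg_le1 hP hb L) _ _.
  by rewrite -expnCM sup_avg_ge.
by move=> N m; rewrite -expnCM; apply: box_sum_le.
Qed.
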